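(* Let $\pi$ be a supercuspidal representation of $G$ with trivial central character and $a(\pi)=4n$, $n\ge1$, let $T=T_\alpha$ be an inert torus in canonical form, and let $W_0\in\mathcal W(\pi,\psi)$ be a minimal vector for $T$ in the Whittaker model of $\pi$. Put $\mathfrak a=-a_{\theta_\pi,T}\alpha\in\mathfrak o^\times$. Then there is a constant $c\in\mathbb{C}$ such that for all $y\in F^\times$, $W_0(a(y))=c$ if $y\in\varpi^{-2n}\mathfrak aU_n$ and $W_0(a(y))=0$ otherwise.
   Context: $F$ is a non-archimedean local field of characteristic zero with ring of integers $\mathfrak o$, maximal ideal $\mathfrak p$, uniformizer $\varpi$, odd residue cardinality; $U_m=\{x\in\mathfrak o^\times:v(x-1)\ge m\}$; $E$ the unramified quadratic extension; $G=\mathrm{GL}_2(F)$, $Z$ its centre, $a(y)=\mathrm{diag}(y,1)$, $n(x)=\begin{pmatrix}1&x\\0&1\end{pmatrix}$. $\psi$ is an additive character of $F$ trivial on $\mathfrak o$ but not $\varpi^{-1}\mathfrak o$, $\psi_E=\psi\circ\mathrm{Tr}_{E/F}$. $\mathcal W(\pi,\psi)$ is the Whittaker model: the unique space of functions $W$ on $G$ with $W(n(x)g)=\psi(x)W(g)$, stable under right translation, realizing $\pi$. $a(\pi)$ is the least $r\ge0$ such that $\pi$ has a nonzero vector fixed by $\mathrm{GL}_2(\mathfrak o)\cap\begin{pmatrix}1+\mathfrak p^r&\mathfrak o\\\mathfrak p^r&\mathfrak o\end{pmatrix}$; for a character $\chi$ of $E^\times$, $a(\chi)$ is the least $m\ge0$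 with $\chi$ trivial on $\{x\in\mathfrak o_E^\times:v(x-1)\ge m\}$. Inert torus in canonical form: $T=T_\alpha=\{\begin{pmatrix}x&y\\-\alpha y&x\end{pmatrix}\ne0\}$, $\alpha\in\mathfrak o^\times$, $-\alpha$ non-square, identified with $E^\times$ via $x+y\sqrt{-\alpha}\mapsto\begin{pmatrix}x&y\\-\alpha y&x\end{pmatrix}$; $w_\alpha=\begin{pmatrix}0&1\\-\alpha&0\end{pmatrix}$; $K(n)=\{g\in\mathrm{GL}_2(\mathfrak o):g\equiv1\bmod\mathfrak p^n\}$; $K_T(n)=\{\begin{pmatrix}a&b\\c&d\end{pmatrix}\in\mathrm{GL}_2(\mathfrak o):a-d,\ c+b\alpha\in\mathfrak p^n\}$, $ZK_T(n)=TK(n)$. For $\theta$ a character of $E^\times$ with $a(\theta)=2n$, $\theta|_{F^\times}=1$, $a_{\theta,T}\in\mathfrak o^\times$ is a fixed element with $\psi_E(\varpi^{-n}a_{\theta,T}\sqrt{-\alpha}u)=\theta(1+\varpi^nu)$ for $u\in\mathfrak o_E$, and $\chi_{\theta,T}(t(1+\varpi^ng))=\theta(t)\psi(\varpi^{-n}a_{\theta,T}\mathrm{Tr}(w_\alpha g))$ is a character of $ZK_T(n)$. There is a character $\theta_\pi$ of $E^\times$ with $a(\theta_\pi)=2n$, $\theta_\pi|_{F^\times}=1$ and $\pi\simeq c\text{-}\mathrm{Ind}_{ZK_T(n)}^G\chi_{\theta_\pi,T}$ for all such $T$; fix it. A minimal vector for $T$ is a nonzero $v\in\pi$ with $\pi(k)v=\chi_{\theta_\pi,T}(k)v$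 for all $k\in ZK_T(n)$. *)

From mathcomp Require Import all_boot all_order all_algebra.
From mathcomp Require Import complex.
From mathcomp Require Import Rstruct.
Set Implicit Arguments. Unset Strict Implicit. Unset Printing Implicit Defensive.
Import Order.TTheory GRing.Theory Num.Theory.
Local Open Scope ring_scope.

Definition C := complex Rdefinitions.R.

Section LocalDefs.
Variable F : fieldType.

(* valuation data: v : F -> int is meaningful on F^x; [vge v x m] means v(x) >= m,
   with the convention v(0) = +oo *)
Definition vge (v : F -> int) (x : F) (m : int) : bool := (x == 0) || (m <= v x).

(* F is a non-archimedean local field of characteristic zero, with normalized
   discrete valuation v, uniformizer w, complete, finite residue field of odd cardinality *)
Record nonarch_local_field (v : F -> int) (w : F) : Prop := {
  nlf_char0 : [pchar F] =i pred0;
  nlf_mul : forall x y, x != 0 -> y != 0 -> v (x * y) = v x + v y;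
  nlf_add : forall x y m, vge v x m -> vge v y m -> vge v (x + y) m;
  nlf_unif_nz : w != 0;
  nlf_unif : v w = 1;
  nlf_complete : forall u : nat -> F,
    (forall m : int, exists N, forall i j, (N <= i)%N -> (N <= j)%N -> vge v (u i - u j) m) ->
    exists l, forall m : int, exists N, forall i, (N <= i)%N -> vge v (u i - l) m;
  nlf_residue : exists s : seq F,
    [/\ all (fun r => vge v r 0) s,
        (forall i j, (i < size s)%N -> (j < size s)%N ->
           vge v (nth 0 s i - nth 0 s j) 1 -> i = j),
        (forall x, vge v x 0 -> exists2 r, r \in s & vge v (x - r) 1)
      & odd (size s)]
}.

Definition inU (v : F -> int) (m : nat) (x : F) : Prop :=
  [/\ x != 0, v x = 0 & vge v (x - 1) m%:Z].

Definition std_addchar (v : F -> int) (psi : F -> C) : Prop :=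
  [/\ forall x, psi x != 0,
      forall x y, psi (x + y) = psi x * psi y,
      forall x, vge v x 0 -> psi x = 1
    & exists2 x, vge v x (-1) & psi x != 1].

Definition canonical_inert (v : F -> int) (alpha : F) : Prop :=
  [/\ alpha != 0, v alpha = 0 & forall x : F, x ^+ 2 != - alpha].

(* E = F(sqrt(-alpha)), element x + y sqrt(-alpha) represented as the pair (x, y) *)
Definition emul (alpha : F) (p q : F * F) : F * F :=
  (p.1 * q.1 - alpha * p.2 * q.2, p.1 * q.2 + p.2 * q.1).
Definition enz (p : F * F) : bool := (p.1 != 0) || (p.2 != 0).
Definition trE (p : F * F) : F := 2%:R * p.1.
Definition psiE (psi : F -> C) (p : F * F) : C := psi (trE p).
Definition sqrtE : F * F := (0, 1).

(* o_E and U_E^m (E unramified, so v_E(x + y sqrt(-alpha)) = min(v x, v y)) *)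
Definition inOE (v : F -> int) (p : F * F) : bool := vge v p.1 0 && vge v p.2 0.
Definition inUE (v : F -> int) (m : nat) (p : F * F) : bool :=
  if m == 0%N then inOE v p && ~~ (vge v p.1 1 && vge v p.2 1)
  else vge v (p.1 - 1) m%:Z && vge v p.2 m%:Z.

Definition trivial_on_UE (v : F -> int) (theta : F * F -> C) (m : nat) : Prop :=
  forall p, inUE v m p -> theta p = 1.

Definition conductorE (v : F -> int) (theta : F * F -> C) (m : nat) : Prop :=
  trivial_on_UE v theta m /\ forall m', trivial_on_UE v theta m' -> (m <= m')%N.

Definition charE (alpha : F) (theta : F * F -> C) : Prop :=
  (forall p, enz p -> theta p != 0) /\
  (forall p q, enz p -> enz q -> theta (emul alpha p q) = theta p * theta q).

Definition mx2 (a b c d : F) : 'M[F]_2 :=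
  \matrix_(i < 2, j < 2)
    if (i : nat) == 0%N then (if (j : nat) == 0%N then a else b)
    else (if (j : nat) == 0%N then c else d).

Definition amat (y : F) : 'M[F]_2 := mx2 y 0 0 1.
Definition nmat (x : F) : 'M[F]_2 := mx2 1 x 0 1.
Definition walpha (alpha : F) : 'M[F]_2 := mx2 0 1 (- alpha) 0.
Definition torus_mx (alpha : F) (p : F * F) : 'M[F]_2 := mx2 p.1 p.2 (- alpha * p.2) p.1.

(* chi_rel k c : k lies in Z K_T(n) = T K(n) and chi_{theta,T}(k) = c,
   via chi(t (1 + w^n g)) = theta(t) psi(w^-n a Tr(w_alpha g)), g in M_2(o) *)
Definition chi_rel (v : F -> int) (w alpha : F) (n : nat) (theta : F * F -> C)
    (psi : F -> C) (a : F) (k : 'M[F]_2) (c : C) : Prop :=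
  exists (t : F * F) (g : 'M[F]_2),
    [/\ enz t, forall i j, vge v (g i j) 0,
        k = torus_mx alpha t *m (1%:M + (w ^+ n) *: g)
      & c = theta t * psi (w ^- n * a * \tr (walpha alpha *m g))].

(* functions on G = GL_2(F), represented as functions on 2x2 matrices vanishing
   off GL_2(F) *)
Definition rtrans (g : 'M[F]_2) (f : 'M[F]_2 -> C) : 'M[F]_2 -> C :=
  fun h => f (h *m g).
Definition fadd (f1 f2 : 'M[F]_2 -> C) : 'M[F]_2 -> C := fun h => f1 h + f2 h.
Definition fscale (c : C) (f : 'M[F]_2 -> C) : 'M[F]_2 -> C := fun h => c * f h.
Definition fzero : 'M[F]_2 -> C := fun _ => 0.

Definition cInd (chi : 'M[F]_2 -> C -> Prop) (f : 'M[F]_2 -> C) : Prop :=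
  [/\ forall g, g \notin unitmx -> f g = 0,
      forall k c g, chi k c -> g \in unitmx -> f (k *m g) = c * f g
    & exists s : seq 'M[F]_2, forall g, g \in unitmx -> f g != 0 ->
        exists h k c, [/\ h \in s, chi k c & g = k *m h]].

Definition fun_space (V : ('M[F]_2 -> C) -> Prop) : Prop :=
  [/\ V fzero,
      (forall f1 f2, V f1 -> V f2 -> V (fadd f1 f2)),
      (forall c f, V f -> V (fscale c f))
    & (forall W g, V W -> g \notin unitmx -> W g = 0)].

Definition intertwining_iso (chi : 'M[F]_2 -> C -> Prop) (V : ('M[F]_2 -> C) -> Prop)
    (Phi : ('M[F]_2 -> C) -> ('M[F]_2 -> C)) : Prop :=
  [/\ (forall f, cInd chi f -> V (Phi f)),
      (forall f1 f2, cInd chi f1 -> cInd chi f2 -> Phi f1 = Phi f2 -> f1 = f2),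
      (forall W, V W -> exists2 f, cInd chi f & Phi f = W),
      (forall f1 f2 c, cInd chi f1 -> cInd chi f2 ->
          Phi (fadd f1 f2) = fadd (Phi f1) (Phi f2) /\ Phi (fscale c f1) = fscale c (Phi f1))
    & (forall f g, cInd chi f -> g \in unitmx -> Phi (rtrans g f) = rtrans g (Phi f))].

Definition whittaker_model_of (psi : F -> C) (chi : 'M[F]_2 -> C -> Prop)
    (V : ('M[F]_2 -> C) -> Prop) : Prop :=
  [/\ fun_space V,
      (forall W x g, V W -> g \in unitmx -> W (nmat x *m g) = psi x * W g),
      (forall W g, V W -> g \in unitmx -> V (rtrans g W))
    & exists Phi, intertwining_iso chi V Phi].

Definition nonzero_fun (f : 'M[F]_2 -> C) : Prop := exists g, f g != 0.

Definition trivial_central_char (V : ('M[F]_2 -> C) -> Prop) : Prop :=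
  forall W z g, V W -> z != 0 -> W (g *m z%:M) = W g.

Definition inK1 (v : F -> int) (r : nat) (k : 'M[F]_2) : Prop :=
  [/\ forall i j, vge v (k i j) 0, \det k != 0, v (\det k) = 0,
      vge v (k 0 0 - 1) r%:Z & vge v (k 1 0) r%:Z].

Definition has_K1_fixed (v : F -> int) (V : ('M[F]_2 -> C) -> Prop) (r : nat) : Prop :=
  exists W, [/\ V W, nonzero_fun W & forall k g, inK1 v r k -> W (g *m k) = W g].

Definition conductorV (v : F -> int) (V : ('M[F]_2 -> C) -> Prop) (r : nat) : Prop :=
  has_K1_fixed v V r /\ forall r', has_K1_fixed v V r' -> (r <= r')%N.

End LocalDefs.

From mathcomp Require Import all_boot all_order all_algebra.
From mathcomp Require Import complex.
From mathcomp Require Import Rstruct.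
From mathcomp Require Import ring zify.
Import Order.TTheory GRing.Theory Num.Theory.
Local Open Scope ring_scope.
Set Implicit Arguments. Unset Strict Implicit.

(* W0 transforms under Z K_T(n) by chi_{theta,T}.  For u in U_n the diagonal
   element a(u) lies in K(n) with trivial character, so W0(a(y)) only depends on
   the coset y U_n.  For v(x) >= n the unipotent n(x) lies in K(n) with character
   psi(b x), b = w^-2n frak_a, while the Whittaker property gives
   W0(a(y) n(x)) = W0(n(y x) a(y)) = psi(y x) W0(a(y)).  Hence W0(a(y)) <> 0
   forces psi((y - b) x) = 1 on p^n; since psi has conductor o this means
   v(y - b) >= -n, i.e. y in b U_n. *)

Section Mx2.
Variable F : fieldType.

Lemma mx2_1 : mx2 1 0 0 1 = 1%:M :> 'M[F]_2.
Proof.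
apply/matrixP=> i j; rewrite !mxE.
by case: i => [[|[|i]] Hi] //; case: j => [[|[|j]] Hj].
Qed.

Lemma mx2_add (a b c d a' b' c' d' : F) :
  mx2 a b c d + mx2 a' b' c' d' = mx2 (a + a') (b + b') (c + c') (d + d').
Proof. by apply/matrixP=> i j; rewrite !mxE; do 2 case: ifP. Qed.

Lemma mx2_scale (s a b c d : F) : s *: mx2 a b c d = mx2 (s * a) (s * b) (s * c) (s * d).
Proof. by apply/matrixP=> i j; rewrite !mxE; do 2 case: ifP. Qed.

Lemma mx2_mul (a b c d a' b' c' d' : F) :
  mx2 a b c d *m mx2 a' b' c' d' =
  mx2 (a * a' + b * c') (a * b' + b * d') (c * a' + d * c') (c * b' + d * d').
Proof.
apply/matrixP=> i j; rewrite !mxE !big_ord_recl big_ord0 !mxE.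
by case: i => [[|[|i]] Hi] //; case: j => [[|[|j]] Hj] //=; rewrite addr0.
Qed.

Lemma mx2_tr (a b c d : F) : \tr (mx2 a b c d) = a + d.
Proof. by rewrite /mxtrace !big_ord_recl big_ord0 !mxE addr0. Qed.

Lemma amatM (y u : F) : amat (y * u) = amat y *m amat u.
Proof. by rewrite /amat mx2_mul; congr mx2; ring. Qed.

Lemma amat_unit (y : F) : y != 0 -> amat y \in unitmx.
Proof.
move=> y0; suff /mulmx1_unit[] : amat y *m amat y^-1 = 1%:M by [].
by rewrite -amatM divff // -mx2_1.
Qed.

Lemma amat_nmat (y x : F) : amat y *m nmat x = nmat (y * x) *m amat y.
Proof. by rewrite /amat /nmat !mx2_mul; congr mx2; ring. Qed.

Lemma torus_mx1 (alpha : F) : torus_mx alpha (1, 0) = 1%:M.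
Proof. by rewrite /torus_mx /= mulr0 -mx2_1. Qed.

End Mx2.

Section Valuation.
Variables (F : fieldType) (v : F -> int) (w : F).
Hypothesis HF : nonarch_local_field v w.

Lemma valuation1 : v 1 = 0.
Proof.
have := nlf_mul HF (oner_neq0 F) (oner_neq0 F); rewrite mulr1.
by move/(congr1 (fun z => z - v 1)); rewrite /= addrK subrr.
Qed.

Lemma valuationN x : v (- x) = v x.
Proof.
have [->|x0] := eqVneq x 0; first by rewrite oppr0.
have N10 : (-1 : F) != 0 by rewrite oppr_eq0 oner_neq0.
have := nlf_mul HF N10 N10; rewrite mulrNN mulr1 valuation1 => vN1.
by rewrite -mulN1r (nlf_mul HF N10 x0); lia.
Qed.

Lemma valuationV x : x != 0 -> v x^-1 = - v x.
Proof.
move=> x0; have := nlf_mul HF x0 (invr_neq0 x0).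
by rewrite divff // valuation1; lia.
Qed.

Lemma valuation_unif_exp k : v (w ^+ k) = k%:Z.
Proof.
have w0 := nlf_unif_nz HF.
elim: k => [|k IH]; first by rewrite expr0 valuation1.
by rewrite exprS (nlf_mul HF w0 (expf_neq0 k w0)) IH (nlf_unif HF); lia.
Qed.

Lemma valuation_unif_expV k : v (w ^- k) = - k%:Z.
Proof. by rewrite valuationV ?valuation_unif_exp // expf_neq0 // (nlf_unif_nz HF). Qed.

Lemma vge_valuation x : vge v x (v x).
Proof. by rewrite /vge lexx orbT. Qed.

Lemma vgeW x (m m' : int) : m' <= m -> vge v x m -> vge v x m'.
Proof. by rewrite /vge => le_m'm /orP[->|/(le_trans le_m'm)->]; rewrite ?orbT. Qed.

Lemma vgeN x m : vge v x m -> vge v (- x) m.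
Proof. by rewrite /vge oppr_eq0 valuationN. Qed.

Lemma vgeM x y m m' : vge v x m -> vge v y m' -> vge v (x * y) (m + m').
Proof.
rewrite /vge mulf_eq0.
have [//|x0] := eqVneq x 0; have [//|y0] := eqVneq y 0.
by rewrite /= (nlf_mul HF x0 y0) => *; apply: lerD.
Qed.

Lemma vge0 m : vge v 0 m.
Proof. by rewrite /vge eqxx. Qed.

Lemma vge1 : vge v 1 0.
Proof. by rewrite /vge valuation1 lexx orbT. Qed.

Lemma inU_of_vge m u : (1 <= m)%N -> vge v (u - 1) m%:Z -> inU v m u.
Proof.
move=> m_gt0 um; have um0 : vge v (u - 1) 0 by apply: vgeW um.
have um1 : vge v (- (u - 1)) 1 by apply/vgeN/(vgeW _ um); lia.
have u0 : u != 0.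
  apply: contraTneq um => ->.
  by rewrite /vge add0r oppr_eq0 oner_eq0 valuationN valuation1 /=; lia.
have : vge v u 0 by have := nlf_add HF um0 vge1; rewrite subrK.
have : ~~ vge v u 1.
  apply/negP=> u1; have := nlf_add HF u1 um1.
  by rewrite opprB addrC subrK /vge oner_eq0 valuation1.
by rewrite /vge (negbTE u0) /=; split=> //; lia.
Qed.

Lemma vge_mul_unif_expV x (m : int) k : vge v x m -> vge v (x * w ^- k) (m - k%:Z).
Proof.
by move=> xm; have := vgeM xm (vge_valuation (w ^- k)); rewrite valuation_unif_expV.
Qed.

Lemma mx2_integral (a b c d : F) :
  vge v a 0 -> vge v b 0 -> vge v c 0 -> vge v d 0 ->
  forall i j, vge v (mx2 a b c d i j) 0.
Proof. by move=> *; rewrite mxE; do 2 case: ifP. Qed.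

End Valuation.

Section AddChar.
Variables (F : fieldType) (v : F -> int) (psi : F -> C).
Hypothesis Hpsi : std_addchar v psi.

Lemma addchar0 : psi 0 = 1.
Proof. by case: Hpsi => _ _ psi_o _; apply: psi_o; rewrite /vge eqxx. Qed.

Lemma addcharB_eq1 x y : psi x = psi y -> psi (x - y) = 1.
Proof.
case: Hpsi => _ psiD _ _ xy.
by rewrite psiD xy -psiD subrr addchar0.
Qed.

Variable w : F.
Hypothesis HF : nonarch_local_field v w.

Lemma addchar_annihilator z (k : int) :
  (forall x, vge v x k -> psi (z * x) = 1) -> vge v z (- k).
Proof.
move=> z_ann; have [->|z0] := eqVneq z 0; first by rewrite /vge eqxx.
case: Hpsi => _ _ _ [x0 x0_ge psi_x0]; rewrite /vge (negbTE z0) /=.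
rewrite leNgt; apply/negP=> vz_lt; move: psi_x0.
rewrite -[x0](mulVKf z0) z_ann ?eqxx //.
apply: vgeW _ (vgeM HF (vge_valuation v z^-1) x0_ge).
by rewrite (valuationV HF z0); lia.
Qed.

End AddChar.

Section PrincipalCongruence.
Variables (F : fieldType) (v : F -> int) (w alpha : F) (n : nat).
Variables (theta : F * F -> C) (psi : F -> C) (a : F).
Hypothesis HF : nonarch_local_field v w.
Hypothesis theta1 : theta (1, 0) = 1.

Let chi := chi_rel v w alpha n theta psi a.

Lemma chi_rel_principal (g : 'M[F]_2) : (forall i j, vge v (g i j) 0) ->
  chi (1%:M + w ^+ n *: g) (psi (w ^- n * a * \tr (walpha alpha *m g))).
Proof.
move=> g_int; exists (1, 0), g; split=> //; last by rewrite theta1 mul1r.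
  by rewrite /enz oner_neq0.
by rewrite torus_mx1 mul1mx.
Qed.

Lemma unif_expK x : w ^+ n * (x * w ^- n) = x.
Proof. by rewrite mulrCA divff ?mulr1 // expf_neq0 // (nlf_unif_nz HF). Qed.

Lemma chi_rel_amat u : std_addchar v psi -> vge v (u - 1) n -> chi (amat u) 1.
Proof.
move=> Hpsi un; set g := mx2 ((u - 1) * w ^- n) 0 0 0.
have -> : amat u = 1%:M + w ^+ n *: g.
  by rewrite -mx2_1 mx2_scale mx2_add unif_expK /amat !(mulr0, addr0) subrKC.
have -> : 1 = psi (w ^- n * a * \tr (walpha alpha *m g)).
  by rewrite /walpha mx2_mul mx2_tr !(mulr0, mul0r, addr0) (addchar0 Hpsi).
apply/chi_rel_principal/mx2_integral; rewrite ?vge0 //.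
by have := vge_mul_unif_expV HF n un; rewrite subrr.
Qed.

Lemma chi_rel_nmat x : vge v x n ->
  chi (nmat x) (psi (w ^- (2 * n) * (- a * alpha) * x)).
Proof.
move=> xn; set g := mx2 0 (x * w ^- n) 0 0.
have -> : nmat x = 1%:M + w ^+ n *: g.
  by rewrite -mx2_1 mx2_scale mx2_add unif_expK /nmat !(mulr0, addr0, add0r).
have -> : w ^- (2 * n) * (- a * alpha) * x = w ^- n * a * \tr (walpha alpha *m g).
  by rewrite /walpha mx2_mul mx2_tr mul2n -addnn exprD invfM; ring.
apply/chi_rel_principal/mx2_integral; rewrite ?vge0 //.
by have := vge_mul_unif_expV HF n xn; rewrite subrr.
Qed.

End PrincipalCongruence.

Section MinimalVector.
Variables (F : fieldType) (v : F -> int) (w : F) (psi : F -> C) (alpha : F) (n : nat).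
Variables (theta : F * F -> C) (a : F) (W0 : 'M[F]_2 -> C).
Hypotheses (HF : nonarch_local_field v w) (Hpsi : std_addchar v psi).
Hypotheses (alpha0 : alpha != 0) (v_alpha : v alpha = 0) (a0 : a != 0) (v_a : v a = 0).
Hypotheses (n_gt0 : (1 <= n)%N) (theta1 : theta (1, 0) = 1).
Hypothesis W0_whittaker : forall x g, g \in unitmx -> W0 (nmat x *m g) = psi x * W0 g.
Hypothesis W0_min :
  forall k c g, chi_rel v w alpha n theta psi a k c -> W0 (g *m k) = c * W0 g.

Let b := w ^- (2 * n) * (- a * alpha).

Lemma minimal_vector_amatMU y u : inU v n u -> W0 (amat (y * u)) = W0 (amat y).
Proof.
case=> _ _ un.
by rewrite amatM (W0_min _ (chi_rel_amat alpha a HF theta1 Hpsi un)) mul1r.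
Qed.

Let oppa_neq0 : - a != 0. Proof. by rewrite oppr_eq0. Qed.
Let unif_expV_neq0 : w ^- (2 * n) != 0.
Proof. by rewrite invr_neq0 // expf_neq0 // (nlf_unif_nz HF). Qed.

Let b_neq0 : b != 0.
Proof. exact: mulf_neq0 unif_expV_neq0 (mulf_neq0 oppa_neq0 alpha0). Qed.

Let valuation_b : v b = - (2 * n)%:Z.
Proof.
rewrite (nlf_mul HF unif_expV_neq0 (mulf_neq0 oppa_neq0 alpha0)).
rewrite (valuation_unif_expV HF) (nlf_mul HF oppa_neq0 alpha0) (valuationN HF).
by rewrite v_a v_alpha !addr0.
Qed.

Lemma minimal_vector_amat_support y : y != 0 -> W0 (amat y) != 0 ->
  exists u, inU v n u /\ y = b * u.
Proof.
move=> y0 W0y.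
have yb_ann : forall x, vge v x n -> psi ((y - b) * x) = 1.
  move=> x xn; rewrite mulrBl; apply: (addcharB_eq1 Hpsi); apply: (mulIf W0y).
  rewrite -W0_whittaker ?amat_unit // -amat_nmat.
  exact: W0_min (chi_rel_nmat alpha psi a HF theta1 xn).
have : vge v (y / b - 1) n.
  rewrite -(divff b_neq0) -mulrBl.
  apply: vgeW _ (vgeM HF (addchar_annihilator Hpsi HF yb_ann) (vge_valuation v b^-1)).
  by rewrite (valuationV HF b_neq0) valuation_b; lia.
by move/(inU_of_vge HF n_gt0) => ybU; exists (y / b); split; rewrite // mulrC divfK.
Qed.

End MinimalVector.

Theorem proposition2p14
  (F : fieldType) (v : F -> int) (w : F) (HF : nonarch_local_field v w)
  (psi : F -> C) (Hpsi : std_addchar v psi)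
  (alpha : F) (Halpha : canonical_inert v alpha)
  (n : nat) (Hn : (1 <= n)%N)
  (theta : F * F -> C) (Htheta : charE alpha theta)
  (Hcond : conductorE v theta (2 * n))
  (HthetaF : forall x : F, x != 0 -> theta (x, 0) = 1)
  (a : F) (Ha0 : a != 0) (Hav : v a = 0)
  (Ha : forall u : F * F, inOE v u ->
          psiE psi (emul alpha (emul alpha (w ^- n * a, 0) (@sqrtE F)) u)
          = theta (1 + w ^+ n * u.1, w ^+ n * u.2))
  (V : ('M[F]_2 -> C) -> Prop)
  (HV : whittaker_model_of psi (chi_rel v w alpha n theta psi a) V)
  (Hcc : trivial_central_char V)
  (HapI : conductorV v V (4 * n))
  (W0 : 'M[F]_2 -> C) (HW0 : V W0) (HW0nz : nonzero_fun W0)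
  (Hmin : forall k c g, chi_rel v w alpha n theta psi a k c -> W0 (g *m k) = c * W0 g) :
  let frak_a := - a * alpha in
  exists c : C, forall y : F, y != 0 ->
    ((exists u, inU v n u /\ y = w ^- (2 * n) * frak_a * u) -> W0 (amat y) = c) /\
    (~ (exists u, inU v n u /\ y = w ^- (2 * n) * frak_a * u) -> W0 (amat y) = 0).
Proof.
move=> frak_a; have theta1 : theta (1, 0) = 1 := HthetaF _ (oner_neq0 F).
case: Halpha => alpha0 v_alpha _; case: HV => _ W0_whittaker _ _.
have {}W0_whittaker x g := W0_whittaker W0 x g HW0.
exists (W0 (amat (w ^- (2 * n) * frak_a))) => y y0; split.
  by case=> u [uU ->]; exact: (minimal_vector_amatMU HF Hpsi theta1 Hmin).
have [//|W0y] := eqVneq (W0 (amat y)) 0; case.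
exact: (minimal_vector_amat_support HF Hpsi alpha0 v_alpha Ha0 Hav Hn theta1
          W0_whittaker Hmin y0 W0y).
Qed.
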